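(* Let $F_0$ and $F_s$ be distribution functions, with $U_r(t):=F_r^{\leftarrow}(1-1/t)$ for $t>1$, $r\in\{0,s\}$, and let $\gamma\in\mathbb{R}$, $\rho\le0$, $c\in\mathbb{R}$, $s\in\mathbb{R}$. Let $a_0$ be a positive function and $\alpha_0$ a function, eventually of constant sign, with $\lim_{t\to\infty}\alpha_0(t)=0$, such that for each $x>0$ $$\lim_{t\to\infty}\frac{\frac{U_0(tx)-U_0(t)}{a_0(t)}-\frac{x^\gamma-1}{\gamma}}{\alpha_0(t)}=H_{\gamma,\rho}(x)$$ and $$\lim_{t\to\infty}\frac{\frac{U_s(t)-U_0(t)}{a_0(t)}-\frac{e^{c\gamma s}-1}{\gamma}}{\alpha_0(t)}=H_{\gamma,\rho}(e^{cs}).$$ Define $\alpha_s(t):=e^{cs\rho}\alpha_0(t)$ and $a_s(t):=e^{cs\gamma}a_0(t)\bigl(1+\alpha_0(t)\frac{e^{cs\rho}-1}{\rho}\bigr)$. Then for every $x>0$ $$\lim_{t\to\infty}\frac{\frac{U_s(tx)-U_s(t)}{a_s(t)}-\frac{x^\gamma-1}{\gamma}}{\alpha_s(t)}=H_{\gamma,\rho}(x).$$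
   Context: $F^{\leftarrow}$ denotes the generalized inverse. $H_{\gamma,\rho}(x):=\frac1\rho\Bigl(\frac{x^{\gamma+\rho}-1}{\gamma+\rho}-\frac{x^\gamma-1}{\gamma}\Bigr)$ for $x>0$, defined by continuity when $\gamma=0$, $\rho=0$ or $\gamma+\rho=0$. Likewise $\frac{x^\gamma-1}{\gamma}:=\log x$ and $\frac{e^{c\gamma s}-1}{\gamma}:=cs$ when $\gamma=0$, and $\frac{e^{cs\rho}-1}{\rho}:=cs$ when $\rho=0$. *)

From Stdlib Require Import Reals.
From Coquelicot Require Import Coquelicot.
Open Scope R_scope.

Definition is_distribution_function (F : R -> R) : Prop :=
  (forall x y, x <= y -> F x <= F y) /\
  (forall x, filterlim F (at_right x) (locally (F x))) /\
  is_lim F m_infty 0 /\ is_lim F p_infty 1.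

Definition gen_inv (F : R -> R) (p : R) : Rbar :=
  Glb_Rbar (fun x => p <= F x).

(* U(t) = F^{<-}(1 - 1/t); finite for t > 1 when F is a distribution function *)
Definition Uq (F : R -> R) (t : R) : R := real (gen_inv F (1 - / t)).

Definition hfun (g x : R) : R :=
  if Req_EM_T g 0 then ln x else (Rpower x g - 1) / g.

Definition eq_fun (g y : R) : R :=
  if Req_EM_T g 0 then y else (exp (g * y) - 1) / g.

(* H_{g,r}(x) = (1/r) ( (x^{g+r}-1)/(g+r) - (x^g-1)/g ), extended by continuity:
   the cases g = 0 and g + r = 0 are handled inside hfun; the case r = 0 is the
   limit r -> 0, i.e. the derivative of a |-> (x^a-1)/a at a = g. *)
Definition Hfun (g r x : R) : R :=
  if Req_EM_T r 0 then
    (if Req_EM_T g 0 then (ln x) ^ 2 / 2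
     else / g * (Rpower x g * ln x - (Rpower x g - 1) / g))
  else / r * (hfun (g + r) x - hfun g x).

(* Expanding [U0 (t x y) - U0 t] to second order once directly and once through
   [t x] gives, for each [y > 0], a linear equation in
   [a0 (t x) / a0 t - x^gamma] and [a0 (t x) alpha0 (t x) / a0 t]; the system for
   [y = e] and [y = e^2] is nondegenerate, so both unknowns are [alpha0 t] times a
   convergent factor: [a0] is second-order and [a0 alpha0] first-order regularly
   varying.  Writing [Us (t x) - Us t] as
   [(Us - U0) (t x) + (U0 (t x) - U0 t) - (Us - U0) t] then expands it to second
   order, and the symmetry of [h (x z)] and [H (x z)] in [x] and [z = e^(c s)]
   turns the limit into [H x] for the auxiliary functions [a_s] and [alpha_s]. *)

From Stdlib Require Import Reals Lra.
From Coquelicot Require Import Coquelicot.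
Open Scope R_scope.

Lemma is_lim_mult_real (f g : R -> R) (x : Rbar) (lf lg : R) :
  is_lim f x lf -> is_lim g x lg -> is_lim (fun t => f t * g t) x (lf * lg).
Proof. intros Hf Hg. exact (is_lim_mult f g x lf lg Hf Hg I). Qed.

Lemma is_lim_div_real (f g : R -> R) (x : Rbar) (lf lg : R) :
  is_lim f x lf -> is_lim g x lg -> lg <> 0 -> is_lim (fun t => f t / g t) x (lf / lg).
Proof.
  intros Hf Hg Hlg. apply is_lim_mult_real; [exact Hf|].
  apply (is_lim_inv g x lg Hg). intros E; injection E; exact Hlg.
Qed.

Lemma is_lim_val (f : R -> R) (x : Rbar) (l l' : R) : is_lim f x l -> l = l' -> is_lim f x l'.
Proof. now intros H <-. Qed.

Ltac is_lim_tac :=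
  match goal with
  | |- is_lim (fun _ => ?c) _ _ => apply is_lim_const
  | |- is_lim _ _ _ => eassumption
  | |- is_lim (fun t => @?f t + @?g t) _ _ => eapply (is_lim_plus' f g); is_lim_tac
  | |- is_lim (fun t => @?f t - @?g t) _ _ => eapply (is_lim_minus' f g); is_lim_tac
  | |- is_lim (fun t => @?f t * @?g t) _ _ => eapply (is_lim_mult_real f g); is_lim_tac
  | |- is_lim (fun t => @?f t / @?g t) _ _ => eapply (is_lim_div_real f g); is_lim_tac
  | _ => idtac
  end.

Lemma eventually_neq0 (f : R -> R) (l : R) :
  is_lim f p_infty l -> l <> 0 -> Rbar_locally p_infty (fun t => f t <> 0).
Proof.
  intros Hf Hl. assert (Hpos : 0 < Rabs l) by now apply Rabs_pos_lt.
  apply (filterlim_locally f l) with (eps := mkposreal _ Hpos) in Hf.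
  apply filter_imp with (2 := Hf). intros t Hb Ht.
  rewrite Ht in Hb. change (Rabs (0 - l) < Rabs l) in Hb.
  rewrite Rminus_0_l, Rabs_Ropp in Hb. exact (Rlt_irrefl _ Hb).
Qed.

Lemma hfun_0 x : hfun 0 x = ln x.
Proof. unfold hfun. destruct (Req_EM_T 0 0); [reflexivity | lra]. Qed.

Lemma hfun_neq0 g x : g <> 0 -> hfun g x = (Rpower x g - 1) / g.
Proof. intros Hg. unfold hfun. destruct (Req_EM_T g 0); [lra | reflexivity]. Qed.

Lemma Hfun_00 x : Hfun 0 0 x = ln x ^ 2 / 2.
Proof. unfold Hfun. destruct (Req_EM_T 0 0); [reflexivity | lra]. Qed.

Lemma Hfun_0r g x : g <> 0 -> Hfun g 0 x = / g * (Rpower x g * ln x - (Rpower x g - 1) / g).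
Proof.
  intros Hg. unfold Hfun. destruct (Req_EM_T 0 0); [|lra].
  destruct (Req_EM_T g 0); [lra | reflexivity].
Qed.

Lemma Hfun_neq0 g r x : r <> 0 -> Hfun g r x = / r * (hfun (g + r) x - hfun g x).
Proof. intros Hr. unfold Hfun. destruct (Req_EM_T r 0); [lra | reflexivity]. Qed.

Lemma eq_fun_hfun_exp g y : eq_fun g y = hfun g (exp y).
Proof.
  unfold eq_fun, hfun, Rpower. rewrite ln_exp.
  destruct (Req_EM_T g 0); [reflexivity | now rewrite Rmult_comm].
Qed.

Lemma Rpower_exp_l y g : Rpower (exp y) g = exp (y * g).
Proof. unfold Rpower. now rewrite ln_exp, Rmult_comm. Qed.

Lemma hfun_mult g x y : 0 < x -> 0 < y -> hfun g (x * y) = hfun g x + Rpower x g * hfun g y.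
Proof.
  intros Hx Hy. destruct (Req_EM_T g 0) as [->|Hg].
  - rewrite !hfun_0, ln_mult, Rpower_O by assumption. ring.
  - rewrite !hfun_neq0, <- Rpower_mult_distr by assumption. field; assumption.
Qed.

Lemma Hfun_mult g r x y : 0 < x -> 0 < y ->
  Hfun g r (x * y) = Hfun g r x + Rpower x g * hfun r x * hfun g y + Rpower x (g + r) * Hfun g r y.
Proof.
  intros Hx Hy. destruct (Req_EM_T r 0) as [->|Hr].
  - rewrite Rplus_0_r, hfun_0. destruct (Req_EM_T g 0) as [->|Hg].
    + rewrite !Hfun_00, hfun_0, ln_mult, Rpower_O by assumption. field.
    + rewrite !Hfun_0r, hfun_neq0, ln_mult, <- Rpower_mult_distr by assumption. field; assumption.
  - rewrite !Hfun_neq0, !hfun_mult, (hfun_neq0 r), Rpower_plus by assumption. field; assumption.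
Qed.

Lemma hfun_comm g x y : 0 < x -> 0 < y ->
  hfun g x + Rpower x g * hfun g y = hfun g y + Rpower y g * hfun g x.
Proof. intros Hx Hy. rewrite <- !hfun_mult, Rmult_comm by assumption. reflexivity. Qed.

Lemma Hfun_comm g r x y : 0 < x -> 0 < y ->
  Hfun g r x + Rpower x g * hfun r x * hfun g y + Rpower x (g + r) * Hfun g r y =
  Hfun g r y + Rpower y g * hfun r y * hfun g x + Rpower y (g + r) * Hfun g r x.
Proof. intros Hx Hy. rewrite <- !Hfun_mult, Rmult_comm by assumption. reflexivity. Qed.

Lemma hfun_Hfun g r x :
  hfun r x * hfun g x + (Rpower x r - 1) * Hfun g r x = hfun r x * hfun (g + r) x.
Proof.
  destruct (Req_EM_T r 0) as [->|Hr].
  - unfold Rpower. rewrite Rmult_0_l, exp_0, Rplus_0_r. ring.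
  - rewrite Hfun_neq0, (hfun_neq0 r) by assumption. field; assumption.
Qed.

Lemma hfun_exp1_neq0 g : hfun g (exp 1) <> 0.
Proof.
  destruct (Req_EM_T g 0) as [->|Hg].
  - rewrite hfun_0, ln_exp. lra.
  - rewrite hfun_neq0, Rpower_exp_l, Rmult_1_l by assumption.
    intros E. apply Hg, exp_inv. rewrite exp_0.
    apply (Rmult_eq_compat_r g) in E. field_simplify in E; lra.
Qed.

Lemma Hfun_det_neq0 g r :
  let y := exp 1 in hfun g y * Hfun g r (y * y) - hfun g (y * y) * Hfun g r y <> 0.
Proof.
  intros y. assert (Hy : 0 < y) by apply exp_pos.
  rewrite Hfun_mult, hfun_mult, Rpower_plus by assumption.
  replace (hfun g y * (Hfun g r y + Rpower y g * hfun r y * hfun g y + Rpower y g * Rpower y r * Hfun g r y)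
     - (hfun g y + Rpower y g * hfun g y) * Hfun g r y)
    with (Rpower y g * hfun g y * (hfun r y * hfun g y + (Rpower y r - 1) * Hfun g r y)) by ring.
  rewrite hfun_Hfun. unfold y. rewrite Rpower_exp_l.
  repeat apply Rmult_integral_contrapositive_currified;
    auto using exp_neq_0, hfun_exp1_neq0.
Qed.

Lemma filterlim_mult_r_p_infty x :
  0 < x -> filterlim (fun t => t * x) (Rbar_locally p_infty) (Rbar_locally p_infty).
Proof.
  intros Hx P [M HM]. exists (M / x). intros t Ht. apply HM.
  apply (Rmult_lt_compat_r x) in Ht; [|assumption].
  now replace (M / x * x) with M in Ht by (field; lra).
Qed.

Lemma eventually_mult_r (P : R -> Prop) x :
  0 < x -> Rbar_locally p_infty P -> Rbar_locally p_infty (fun t => P (t * x)).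
Proof. intros Hx HP. exact (filterlim_mult_r_p_infty x Hx P HP). Qed.

Lemma is_lim_comp_mult_r (f : R -> R) (x l : R) :
  0 < x -> is_lim f p_infty l -> is_lim (fun t => f (t * x)) p_infty l.
Proof. intros Hx Hf. eapply filterlim_comp; [apply filterlim_mult_r_p_infty, Hx | exact Hf]. Qed.

Lemma cramer2 h1 h2 p1 p2 u v w1 w2 :
  h1 * u + p1 * v = w1 -> h2 * u + p2 * v = w2 -> h1 * p2 - h2 * p1 <> 0 ->
  u = (w1 * p2 - w2 * p1) / (h1 * p2 - h2 * p1) /\ v = (h1 * w2 - h2 * w1) / (h1 * p2 - h2 * p1).
Proof. intros <- <- HD. split; field; assumption. Qed.

Section SecondOrder.

Variables (U a alpha : R -> R) (g r : R).
Hypothesis a_neq0 : Rbar_locally p_infty (fun t => a t <> 0).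
Hypothesis alpha_neq0 : Rbar_locally p_infty (fun t => alpha t <> 0).
Hypothesis second_order : forall x, 0 < x ->
  is_lim (fun t => ((U (t * x) - U t) / a t - hfun g x) / alpha t) p_infty (Hfun g r x).

Definition second_order_rem x t :=
  ((U (t * x) - U t) / a t - hfun g x) / alpha t - Hfun g r x.

Lemma second_order_rem_lim x : 0 < x -> is_lim (second_order_rem x) p_infty 0.
Proof.
  intros Hx. pose proof (second_order x Hx).
  eapply is_lim_val; [unfold second_order_rem; is_lim_tac | ring].
Qed.

Lemma U_increment x t : a t <> 0 -> alpha t <> 0 ->
  U (t * x) - U t = a t * (hfun g x + alpha t * (Hfun g r x + second_order_rem x t)).
Proof. intros Ha Hal. unfold second_order_rem. field. split; assumption. Qed.

Definition rem_coef x y t := Hfun g r y + second_order_rem y (t * x).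
Definition rem_rhs x y t :=
  Hfun g r (x * y) - Hfun g r x + second_order_rem (x * y) t - second_order_rem x t.

Lemma rem_coef_lim x y : 0 < x -> 0 < y -> is_lim (rem_coef x y) p_infty (Hfun g r y).
Proof.
  intros Hx Hy. pose proof (is_lim_comp_mult_r _ x 0 Hx (second_order_rem_lim y Hy)).
  eapply is_lim_val; [unfold rem_coef; is_lim_tac | ring].
Qed.

Lemma rem_rhs_lim x y : 0 < x -> 0 < y -> is_lim (rem_rhs x y) p_infty
  (Rpower x g * hfun r x * hfun g y + Rpower x (g + r) * Hfun g r y).
Proof.
  intros Hx Hy. pose proof (second_order_rem_lim x Hx).
  pose proof (second_order_rem_lim _ (Rmult_lt_0_compat _ _ Hx Hy)).
  eapply is_lim_val; [unfold rem_rhs; is_lim_tac|]. rewrite Hfun_mult by assumption. ring.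
Qed.

Lemma increment_system x y t : 0 < x -> 0 < y ->
  a t <> 0 -> alpha t <> 0 -> a (t * x) <> 0 -> alpha (t * x) <> 0 ->
  hfun g y * (a (t * x) / a t - Rpower x g) + rem_coef x y t * (a (t * x) * alpha (t * x) / a t)
  = alpha t * rem_rhs x y t.
Proof.
  intros Hx Hy Ha Hal Ha' Hal'. unfold rem_coef, rem_rhs.
  pose proof (U_increment (x * y) t Ha Hal) as Exy.
  pose proof (U_increment x t Ha Hal) as Ex.
  pose proof (U_increment y (t * x) Ha' Hal') as Ey.
  rewrite <- Rmult_assoc, hfun_mult in Exy by assumption.
  apply (Rmult_eq_reg_l (a t)); [|assumption].
  replace (a t * (hfun g y * (a (t * x) / a t - Rpower x g)
     + (Hfun g r y + second_order_rem y (t * x)) * (a (t * x) * alpha (t * x) / a t)))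
    with (a (t * x) * (hfun g y + alpha (t * x) * (Hfun g r y + second_order_rem y (t * x)))
          - a t * Rpower x g * hfun g y) by (field; assumption).
  rewrite <- Ey. lra.
Qed.

Definition scale_rate x t := (a (t * x) / a t - Rpower x g) / alpha t.
Definition scale_alpha_ratio x t := a (t * x) * alpha (t * x) / (a t * alpha t).

Section Cramer.

Variables (x y1 y2 : R).
Hypotheses (Hx : 0 < x) (Hy1 : 0 < y1) (Hy2 : 0 < y2).

Let det t := hfun g y1 * rem_coef x y2 t - hfun g y2 * rem_coef x y1 t.

Lemma scale_cramer : Rbar_locally p_infty (fun t => det t <> 0 ->
  scale_rate x t = (rem_rhs x y1 t * rem_coef x y2 t - rem_rhs x y2 t * rem_coef x y1 t) / det t /\
  scale_alpha_ratio x t = (hfun g y1 * rem_rhs x y2 t - hfun g y2 * rem_rhs x y1 t) / det t).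
Proof.
  generalize (filter_and _ _ a_neq0 (filter_and _ _ alpha_neq0 (filter_and _ _
    (eventually_mult_r _ x Hx a_neq0) (eventually_mult_r _ x Hx alpha_neq0)))).
  apply filter_imp. intros t (Ha & Hal & Ha' & Hal') Hdet.
  destruct (cramer2 _ _ _ _ _ _ _ _ (increment_system x y1 t Hx Hy1 Ha Hal Ha' Hal')
    (increment_system x y2 t Hx Hy2 Ha Hal Ha' Hal') Hdet) as [Eu Ev].
  unfold scale_rate, scale_alpha_ratio, det in *. split.
  - rewrite Eu. field. split; assumption.
  - replace (a (t * x) * alpha (t * x) / (a t * alpha t))
      with (a (t * x) * alpha (t * x) / a t / alpha t) by (field; split; assumption).
    rewrite Ev. field. split; assumption.
Qed.

Lemma det_lim : is_lim det p_infty
  (hfun g y1 * Hfun g r y2 - hfun g y2 * Hfun g r y1).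
Proof.
  pose proof (rem_coef_lim x y1 Hx Hy1). pose proof (rem_coef_lim x y2 Hx Hy2).
  unfold det. is_lim_tac.
Qed.

End Cramer.

Lemma scale_second_order x : 0 < x ->
  is_lim (scale_rate x) p_infty (Rpower x g * hfun r x) /\
  is_lim (scale_alpha_ratio x) p_infty (Rpower x (g + r)).
Proof.
  intros Hx. pose (y1 := exp 1). pose (y2 := y1 * y1).
  assert (Hy1 : 0 < y1) by apply exp_pos. assert (Hy2 : 0 < y2) by now apply Rmult_lt_0_compat.
  pose proof (Hfun_det_neq0 g r) as HDelta. fold y1 y2 in HDelta.
  pose proof (det_lim x y1 y2 Hx Hy1 Hy2) as Hdet.
  pose proof (rem_coef_lim x y1 Hx Hy1). pose proof (rem_coef_lim x y2 Hx Hy2).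
  pose proof (rem_rhs_lim x y1 Hx Hy1). pose proof (rem_rhs_lim x y2 Hx Hy2).
  assert (Hev := filter_and _ _ (scale_cramer x y1 y2 Hx Hy1 Hy2)
                  (eventually_neq0 _ _ Hdet HDelta)).
  split; eapply is_lim_ext_loc;
    try (eapply filter_imp; [|exact Hev]; intros t [Et Hdt]; symmetry; apply (Et Hdt)).
  all: eapply is_lim_val; [apply is_lim_div_real; [is_lim_tac | exact Hdet | exact HDelta]|].
  all: field; exact HDelta.
Qed.

End SecondOrder.

Section Shift.

Variables (U0 Us a alpha : R -> R) (g r k : R).
Hypothesis a_neq0 : Rbar_locally p_infty (fun t => a t <> 0).
Hypothesis alpha_neq0 : Rbar_locally p_infty (fun t => alpha t <> 0).
Hypothesis alpha_lim : is_lim alpha p_infty 0.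
Hypothesis second_order : forall x, 0 < x ->
  is_lim (fun t => ((U0 (t * x) - U0 t) / a t - hfun g x) / alpha t) p_infty (Hfun g r x).
Hypothesis shift_expansion :
  is_lim (fun t => ((Us t - U0 t) / a t - eq_fun g k) / alpha t) p_infty (Hfun g r (exp k)).

Definition shift_rem t := ((Us t - U0 t) / a t - eq_fun g k) / alpha t - Hfun g r (exp k).

Lemma shift_rem_lim : is_lim shift_rem p_infty 0.
Proof. eapply is_lim_val; [unfold shift_rem; is_lim_tac | ring]. Qed.

Definition shift_increment_rem x t :=
  scale_rate a alpha g x t * eq_fun g k
  + scale_alpha_ratio a alpha x t * (Hfun g r (exp k) + shift_rem (t * x))
  + Hfun g r x + second_order_rem U0 a alpha g r x t - Hfun g r (exp k) - shift_rem t.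

Lemma Us_increment x t : 0 < x ->
  a t <> 0 -> alpha t <> 0 -> a (t * x) <> 0 -> alpha (t * x) <> 0 ->
  (Us (t * x) - Us t) / a t = exp (k * g) * hfun g x + alpha t * shift_increment_rem x t.
Proof.
  intros Hx Ha Hal Ha' Hal'.
  assert (Hcomm := hfun_comm g x (exp k) Hx (exp_pos k)).
  rewrite Rpower_exp_l, <- eq_fun_hfun_exp in Hcomm.
  assert (E0 := U_increment U0 a alpha g r x t Ha Hal).
  unfold shift_increment_rem, scale_rate, scale_alpha_ratio, shift_rem.
  replace (Us (t * x) - Us t) with
    ((Us (t * x) - U0 (t * x)) + (U0 (t * x) - U0 t) - (Us t - U0 t)) by ring.
  replace (exp (k * g) * hfun g x) with (hfun g x + Rpower x g * eq_fun g k - eq_fun g k) by lra.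
  rewrite E0. field. repeat split; assumption.
Qed.

Lemma shift_increment_rem_lim x : 0 < x -> is_lim (shift_increment_rem x) p_infty
  (Rpower x g * hfun r x * eq_fun g k + Rpower x (g + r) * Hfun g r (exp k)
   + Hfun g r x - Hfun g r (exp k)).
Proof.
  intros Hx. destruct (scale_second_order U0 a alpha g r a_neq0 alpha_neq0 second_order x Hx).
  pose proof (second_order_rem_lim U0 a alpha g r second_order x Hx).
  pose proof shift_rem_lim. pose proof (is_lim_comp_mult_r _ x 0 Hx shift_rem_lim).
  eapply is_lim_val; [unfold shift_increment_rem; is_lim_tac | ring].
Qed.

Theorem shifted_second_order x : 0 < x ->
  is_lim (fun t => ((Us (t * x) - Us t) / (exp (k * g) * a t * (1 + alpha t * eq_fun r k))
                    - hfun g x) / (exp (k * r) * alpha t))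
         p_infty (Hfun g r x).
Proof.
  intros Hx. set (E := exp (k * g)). set (E' := exp (k * r)). set (f := eq_fun r k).
  assert (HE : E * E' <> 0) by (apply Rmult_integral_contrapositive_currified; apply exp_neq_0).
  assert (Hf : Rbar_locally p_infty (fun t => 1 + alpha t * f <> 0)).
  { apply (eventually_neq0 _ (1 + 0 * f)); [is_lim_tac | lra]. }
  apply (is_lim_ext_loc (fun t => (shift_increment_rem x t - E * f * hfun g x)
                                  / (E * E' * (1 + alpha t * f)))).
  - generalize (filter_and _ _ a_neq0 (filter_and _ _ alpha_neq0 (filter_and _ _
      (eventually_mult_r _ x Hx a_neq0) (filter_and _ _ (eventually_mult_r _ x Hx alpha_neq0) Hf)))).
    apply filter_imp. intros t (Ha & Hal & Ha' & Hal' & Hft).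
    assert (HE0 : E <> 0) by apply exp_neq_0. assert (HE'0 : E' <> 0) by apply exp_neq_0.
    replace ((Us (t * x) - Us t) / (E * a t * (1 + alpha t * f)))
      with ((Us (t * x) - Us t) / a t / (E * (1 + alpha t * f))) by (field; tauto).
    rewrite Us_increment by assumption. fold E. field. tauto.
  - pose proof (shift_increment_rem_lim x Hx).
    eapply is_lim_val; [is_lim_tac; rewrite Rmult_0_l, Rplus_0_r, Rmult_1_r; exact HE |].
    pose proof (Hfun_comm g r x (exp k) Hx (exp_pos k)) as Hcomm.
    rewrite !Rpower_exp_l, <- !eq_fun_hfun_exp, Rmult_plus_distr_l, exp_plus in Hcomm.
    fold E E' f in Hcomm. rewrite Rmult_0_l, Rplus_0_r, Rmult_1_r.
    apply (Rmult_eq_reg_r (E * E')); [|exact HE].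
    unfold Rdiv. rewrite Rmult_assoc, Rinv_l, Rmult_1_r by exact HE. lra.
Qed.

End Shift.

Theorem lemma1 (F0 Fs : R -> R) (gamma rho c s : R) (a0 alpha0 : R -> R) :
  is_distribution_function F0 ->
  is_distribution_function Fs ->
  rho <= 0 ->
  (forall t, 1 < t -> 0 < a0 t) ->
  (exists T, (forall t, T < t -> 0 < alpha0 t) \/ (forall t, T < t -> alpha0 t < 0)) ->
  is_lim alpha0 p_infty 0 ->
  (forall x, 0 < x ->
     is_lim (fun t => ((Uq F0 (t * x) - Uq F0 t) / a0 t - hfun gamma x) / alpha0 t)
            p_infty (Hfun gamma rho x)) ->
  is_lim (fun t => ((Uq Fs t - Uq F0 t) / a0 t - eq_fun gamma (c * s)) / alpha0 t)
         p_infty (Hfun gamma rho (exp (c * s))) ->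
  let alphas := fun t => exp (c * s * rho) * alpha0 t in
  let as_ := fun t => exp (c * s * gamma) * a0 t * (1 + alpha0 t * eq_fun rho (c * s)) in
  forall x, 0 < x ->
    is_lim (fun t => ((Uq Fs (t * x) - Uq Fs t) / as_ t - hfun gamma x) / alphas t)
           p_infty (Hfun gamma rho x).
Proof.
  intros _ _ _ Ha0 Hsign Halpha HU0 HUs alphas as_ x Hx.
  apply (shifted_second_order (Uq F0) (Uq Fs) a0 alpha0 gamma rho (c * s)); try assumption.
  - exists 1. intros t Ht. apply Rgt_not_eq, Ha0, Ht.
  - destruct Hsign as [T [HT | HT]]; exists T; intros t Ht; specialize (HT t Ht); lra.
Qed.
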